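(* Let $\mathcal{X}$, $p_{\mathrm{data}}$, $p_{\mathrm{pos}}$ be as in the context, let $\mathcal{F}$ be a class of functions $\mathcal{X}\to\mathbb{R}^k$ with $k=m$, and for $\lambda>0$ let $\mathcal{L}_\lambda(f)=\mathbb{E}_{(x,x^+)\sim p_{\mathrm{pos}}}[\|f(x)-f(x^+)\|_2^2]+\lambda\|\mathbb{E}_{x\sim p_{\mathrm{data}}}[f(x)f(x)^\top]-\mathbb{I}\|_F^2$. Let $\phi\ge 0$ and suppose $f_{\mathrm{eig}}:\mathcal{X}\to\mathbb{R}^m$, $f_{\mathrm{eig}}\in\mathcal{F}$, satisfies $$\mathbb{E}_{(x,x^+)\sim p_{\mathrm{pos}}}\big[\|f_{\mathrm{eig}}(x)-f_{\mathrm{eig}}(x^+)\|_2^2\big]\le\phi,\qquad \mathbb{E}_{x\sim p_{\mathrm{data}}}[f_{\mathrm{eig}}(x)f_{\mathrm{eig}}(x)^\top]=\mathbb{I}.$$ Assume: (A) (with parameters $\tilde\phi,\epsilon$) for every $g:\mathcal{X}\to\mathbb{R}$ of the form $g(x)=f(x)_i$ with $f\in\mathcal{F}$, $i\in[k]$, satisfying $\mathbb{E}_{(x,x^+)\sim p_{\mathrm{pos}}}[(g(x)-g(x^+))^2]\le\tilde\phi\,\mathbb{E}_{x\sim p_{\mathrm{data}}}[g(x)^2]$, there exists $\tilde w\in\mathbb{R}^m$ with $\mathbb{E}_{x\sim p_{\mathrm{data}}}[(\tilde w^\top f_{\mathrm{eig}}(x)-g(x))^2]\le\epsilon$; (B)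 (with parameters $B,\zeta$) for the downstream label vector $\vec y(x)\in\mathbb{R}^r$ there exists $W^*\in\mathbb{R}^{r\times m}$ with $\|W^*\|_F\le B$ and $\mathbb{E}_{x\sim p_{\mathrm{data}}}[\|W^*f_{\mathrm{eig}}(x)-\vec y(x)\|_2^2]\le\zeta$. Suppose $\tilde\phi>\phi$ or $\tilde\phi=\phi=0$. Then for any $\lambda>0$ with $\phi\le\tilde\phi\,(1-\sqrt{\phi/\lambda})$ and any $\hat f\in\arg\min_{f\in\mathcal{F}}\mathcal{L}_\lambda(f)$, there exists $W\in\mathbb{R}^{r\times k}$ with $$\mathbb{E}_{x\sim p_{\mathrm{data}}}\big[\|W\hat f(x)-\vec y(x)\|_2^2\big]\lesssim\zeta+B^2k\Big(\epsilon+\frac{\phi}{\lambda}\Big).$$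
   Context: $p_{\mathrm{pos}}$ is the distribution of positive pairs $(x,x^+)$ (two random views of the same random input) on $\mathcal{X}\times\mathcal{X}$, and $p_{\mathrm{data}}$ is the distribution of a single random view (marginal of $p_{\mathrm{pos}}$). The notation $a\lesssim b$ means $a\le Cb$ for an absolute constant $C$. *)

From HB Require Import structures.
From mathcomp Require Import all_boot all_order all_algebra.
From mathcomp Require Import all_classical all_reals all_analysis.
Set Implicit Arguments. Unset Strict Implicit. Unset Printing Implicit Defensive.
Import Order.TTheory GRing.Theory Num.Theory.
Import numFieldNormedType.Exports.
Local Open Scope classical_set_scope.
Local Open Scope ring_scope.

Definition Expect d (T : measurableType d) (R : realType)
  (P : probability T R) (h : T -> R) : R := Rintegral P setT h.

Definition sqnorm (R : realType) (n : nat) (v : 'cV[R]_n) : R :=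
  \sum_(i < n) v i ord0 ^+ 2.

Definition frob2 (R : realType) (p q : nat) (A : 'M[R]_(p, q)) : R :=
  \sum_(i < p) \sum_(j < q) A i j ^+ 2.

Definition covmx d (X : measurableType d) (R : realType) (m : nat)
  (P : probability X R) (f : X -> 'cV[R]_m) : 'M[R]_m :=
  \matrix_(i, j) Expect P (fun x => f x i ord0 * f x j ord0).

Definition Lloss d (X : measurableType d) (R : realType) (m : nat)
  (ppos : probability (X * X)%type R) (pdata : probability X R)
  (lam : R) (f : X -> 'cV[R]_m) : R :=
  Expect ppos (fun z => sqnorm (f z.1 - f z.2))
  + lam * frob2 (covmx pdata f - 1%:M).

Definition L2vec d (X : measurableType d) (R : realType) (n : nat)
  (pdata : probability X R) (f : X -> 'cV[R]_n) : Prop :=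
  forall i : 'I_n, measurable_fun setT (fun x => f x i ord0) /\
    pdata.-integrable setT (fun x => ((f x i ord0) ^+ 2)%:E).

(* Since [fhat] minimises the loss, [L fhat <= L feig <= phi]: the view variance of
   [fhat] is at most [phi] and its second-moment matrix is within Frobenius distance
   [sqrt (phi / lam)] of the identity.  Hence every coordinate of [fhat] passes the test
   of assumption (A), and [fhat = G feig + e] with [E |e|^2 <= m eps].
   If [m (eps + phi / lam)] is small, then [E (v^T fhat)^2 >= 3/4 |v|^2] while
   [E (v^T fhat)^2 <= 2 |G^T v|^2 + 2 |v|^2 E |e|^2], so [|v|^2 <= 3 |G^T v|^2]: [G] is
   invertible and [W = W* G^-1] satisfies [W fhat - y = W e + (W* feig - y)] with
   [|W|_F^2 <= 3 B^2].  Otherwise the zero predictor already meets the bound, because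
   [E |y|^2 <= 2 zeta + 2 |W*|_F^2]. *)

From HB Require Import structures.
From mathcomp Require Import all_boot all_order all_algebra.
From mathcomp Require Import all_classical all_reals all_analysis.
From mathcomp Require Import measurable_realfun ring lra.
Import Order.TTheory GRing.Theory Num.Theory.
Import numFieldNormedType.Exports.
Local Open Scope classical_set_scope.
Local Open Scope ring_scope.
Set Implicit Arguments. Unset Strict Implicit. Unset Printing Implicit Defensive.

Section linear_algebra.
Variable R : realType.
Implicit Types (n p q : nat).

Lemma sqnormE n (v : 'cV[R]_n) : sqnorm v = (v^T *m v) ord0 ord0.
Proof. by rewrite mxE; apply: eq_bigr => i _; rewrite mxE expr2. Qed.

Lemma sqnorm_ge0 n (v : 'cV[R]_n) : 0 <= sqnorm v.
Proof. by apply: sumr_ge0 => i _; exact: sqr_ge0. Qed.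

Lemma sqnorm_ge_entry n (v : 'cV[R]_n) i : v i ord0 ^+ 2 <= sqnorm v.
Proof.
by rewrite /sqnorm (bigD1 i) //= lerDl; apply: sumr_ge0 => j _; exact: sqr_ge0.
Qed.

Lemma sqnorm0 n : sqnorm (0 : 'cV[R]_n) = 0.
Proof. by rewrite /sqnorm big1 // => i _; rewrite mxE expr0n. Qed.

Lemma sqnormN n (v : 'cV[R]_n) : sqnorm (- v) = sqnorm v.
Proof. by apply: eq_bigr => i _; rewrite mxE sqrrN. Qed.

Lemma sqnormD_le n (u v : 'cV[R]_n) : sqnorm (u + v) <= 2 * sqnorm u + 2 * sqnorm v.
Proof.
rewrite /sqnorm !mulr_sumr -big_split /=; apply: ler_sum => i _.
by rewrite mxE; have := sqr_ge0 (u i ord0 - v i ord0); nra.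
Qed.

Lemma frob2_ge0 p q (A : 'M[R]_(p, q)) : 0 <= frob2 A.
Proof. by apply: sumr_ge0 => i _; apply: sumr_ge0 => j _; exact: sqr_ge0. Qed.

Lemma frob20 p q : frob2 (0 : 'M[R]_(p, q)) = 0.
Proof. by rewrite /frob2 big1 // => i _; rewrite big1 // => j _; rewrite mxE expr0n. Qed.

Lemma frob2_ge_entry p q (A : 'M[R]_(p, q)) i j : A i j ^+ 2 <= frob2 A.
Proof.
rewrite /frob2 (bigD1 i) //= (bigD1 j) //= -addrA lerDl.
apply: addr_ge0; first by apply: sumr_ge0 => k _; exact: sqr_ge0.
by apply: sumr_ge0 => k _; apply: sumr_ge0 => l _; exact: sqr_ge0.
Qed.

Lemma frob2_rows p q (A : 'M[R]_(p, q)) : frob2 A = \sum_i sqnorm (row i A)^T.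
Proof. by apply: eq_bigr => i _; apply: eq_bigr => j _; rewrite !mxE. Qed.

Lemma cauchy_schwarz n (u v : 'cV[R]_n) :
  ((u^T *m v) ord0 ord0) ^+ 2 <= sqnorm u * sqnorm v.
Proof.
have lagrange : \sum_i \sum_j (u i ord0 * v j ord0 - u j ord0 * v i ord0) ^+ 2
    = 2 * (sqnorm u * sqnorm v - ((u^T *m v) ord0 ord0) ^+ 2).
  have -> : \sum_i \sum_j (u i ord0 * v j ord0 - u j ord0 * v i ord0) ^+ 2 =
      \sum_i \sum_j u i ord0 ^+ 2 * v j ord0 ^+ 2
      + \sum_i \sum_j u j ord0 ^+ 2 * v i ord0 ^+ 2
      - 2 * \sum_i \sum_j (u i ord0 * v i ord0) * (u j ord0 * v j ord0).
    rewrite mulr_sumr -big_split /= -sumrB; apply: eq_bigr => i _.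
    by rewrite mulr_sumr -big_split /= -sumrB; apply: eq_bigr => j _; ring.
  have dot : (u^T *m v) ord0 ord0 = \sum_i u i ord0 * v i ord0.
    by rewrite mxE; apply: eq_bigr => i _; rewrite mxE.
  rewrite [X in _ + X - _]exchange_big /= -!big_distrlr /= dot /sqnorm; ring.
suff : 0 <= sqnorm u * sqnorm v - ((u^T *m v) ord0 ord0) ^+ 2 by rewrite subr_ge0.
rewrite -(@pmulr_rge0 _ 2) // -lagrange.
by apply: sumr_ge0 => i _; apply: sumr_ge0 => j _; exact: sqr_ge0.
Qed.

Lemma sqnorm_eq0 n (v : 'cV[R]_n) : sqnorm v = 0 -> v = 0.
Proof.
move=> /psumr_eq0P v0; apply/matrixP => i j; rewrite ord1 mxE.
by apply/eqP; rewrite -sqrf_eq0 v0 // => k _; exact: sqr_ge0.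
Qed.

Lemma sqnorm_mulmx_le p q (A : 'M[R]_(p, q)) (v : 'cV[R]_q) :
  sqnorm (A *m v) <= frob2 A * sqnorm v.
Proof.
rewrite {1}/sqnorm frob2_rows mulr_suml; apply: ler_sum => k _.
have -> : (A *m v) k ord0 = (((row k A)^T)^T *m v) ord0 ord0.
  by rewrite trmxK -row_mul !mxE.
exact: cauchy_schwarz.
Qed.

Lemma sqr_quad_form_le n (D : 'M[R]_n) (v : 'cV[R]_n) :
  ((v^T *m D *m v) ord0 ord0) ^+ 2 <= sqnorm v ^+ 2 * frob2 D.
Proof.
rewrite -mulmxA (le_trans (cauchy_schwarz _ _)) // expr2 -mulrA ler_wpM2l //.
  exact: sqnorm_ge0.
by rewrite mulrC sqnorm_mulmx_le.
Qed.

Section coercive.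
Variables (n : nat) (c : R) (G : 'M[R]_n).
Hypothesis coercive : forall v : 'cV[R]_n, sqnorm v <= c * sqnorm (G^T *m v).

Lemma coercive_unitmx : G \in unitmx.
Proof.
rewrite -row_free_unit -kermx_eq0; apply/eqP/row_matrixP => i.
set u := row i (kermx G).
have Gu : G^T *m u^T = 0 by rewrite -trmx_mul /u -row_mul mulmx_ker row0 trmx0.
have u_le0 : sqnorm u^T <= 0 by rewrite (le_trans (coercive _)) // Gu sqnorm0 mulr0.
rewrite row0 -[u]trmxK (@sqnorm_eq0 _ u^T) ?trmx0 //.
by apply/eqP; rewrite eq_le u_le0 sqnorm_ge0.
Qed.

Lemma frob2_mulmx_invmx_le p (W : 'M[R]_(p, n)) :
  frob2 (W *m invmx G) <= c * frob2 W.
Proof.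
rewrite !frob2_rows mulr_sumr; apply: ler_sum => k _.
rewrite row_mul trmx_mul trmx_inv; apply: le_trans (coercive _) _.
by rewrite mulmxA mulmxV ?mul1mx // unitmx_tr coercive_unitmx.
Qed.

End coercive.

Lemma diag_ge_sub_sqrt_frob2 n (M : 'M[R]_n) i :
  1 - Num.sqrt (frob2 (M - 1%:M)) <= M i i.
Proof.
have := frob2_ge_entry (M - 1%:M) i i; rewrite !mxE eqxx mulr1n => /ler_wsqrtr.
by rewrite sqrtr_sqr => /ler_normlP[+ _]; lra.
Qed.

End linear_algebra.

Section expectation.
Context d (T : measurableType d) (R : realType) (P : probability T R).
Implicit Types h k : T -> R.

Definition rintegrable h := P.-integrable setT (EFin \o h).

(* [L2vec P f] unfolds to [forall i, sqintegrable (fun x => f x i ord0)]. *)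
Definition sqintegrable h :=
  measurable_fun setT h /\ rintegrable (fun x => h x ^+ 2).

Lemma rintegrable_cst c : rintegrable (fun _ => c).
Proof.
apply/integrableP; split; first exact/measurable_EFinP/measurable_cst.
by rewrite integral_cst //= probability_setT mule1 ltry.
Qed.

Lemma rintegrableD h k : rintegrable h -> rintegrable k ->
  rintegrable (fun x => h x + k x).
Proof. exact: integrableD. Qed.

Lemma rintegrableZ c h : rintegrable h -> rintegrable (fun x => c * h x).
Proof. exact: integrableZl. Qed.

Lemma rintegrable_sum (I : Type) (s : seq I) (F : I -> T -> R) :
  (forall i, rintegrable (F i)) -> rintegrable (fun x => \sum_(i <- s) F i x).
Proof.
move=> iF; apply: eq_integrable (integrable_sum measurableT s (fun i _ => iF i)) => //.
by move=> x _ /=; rewrite sumEFin.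
Qed.

Lemma rintegrable_le h k : measurable_fun setT h -> rintegrable k ->
  (forall x, `|h x| <= k x) -> rintegrable h.
Proof.
move=> mh ik hk; apply: le_integrable ik => //; first exact/measurable_EFinP.
by move=> x _ /=; rewrite lee_fin (le_trans (hk x)) ?ler_norm.
Qed.

Lemma sqintegrableM h k : sqintegrable h -> sqintegrable k ->
  rintegrable (fun x => h x * k x).
Proof.
move=> [mh ih] [mk ik]; apply: (rintegrable_le _ (rintegrableD ih ik)) => [|x].
  exact: measurable_funM.
rewrite normrM -[h x ^+ 2]real_normK ?num_real // -[k x ^+ 2]real_normK ?num_real //.
by have := sqr_ge0 (`|h x| - `|k x|); nra.
Qed.

Lemma eq_sqintegrable h k : h =1 k -> sqintegrable h -> sqintegrable k.
Proof. by move/funext ->. Qed.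

Lemma sqintegrable_cst c : sqintegrable (fun _ => c).
Proof. by split; [exact: measurable_cst | exact: rintegrable_cst]. Qed.

Lemma sqintegrableD h k : sqintegrable h -> sqintegrable k ->
  sqintegrable (fun x => h x + k x).
Proof.
move=> Lh Lk; split; first exact: measurable_funD Lh.1 Lk.1.
have := rintegrableD (rintegrableD Lh.2 Lk.2) (rintegrableZ 2 (sqintegrableM Lh Lk)).
by congr rintegrable; apply/funext => x; ring.
Qed.

Lemma sqintegrableZ c h : sqintegrable h -> sqintegrable (fun x => c * h x).
Proof.
move=> [mh ih]; split; first exact: measurable_funM.
by have := rintegrableZ (c ^+ 2) ih; congr rintegrable; apply/funext => x; ring.
Qed.

Lemma sqintegrableB h k : sqintegrable h -> sqintegrable k ->
  sqintegrable (fun x => h x - k x).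
Proof.
move=> Lh Lk; have := sqintegrableD Lh (sqintegrableZ (-1) Lk).
by congr sqintegrable; apply/funext => x; ring.
Qed.

Lemma sqintegrable_sum (I : Type) (s : seq I) (F : I -> T -> R) :
  (forall i, sqintegrable (F i)) -> sqintegrable (fun x => \sum_(i <- s) F i x).
Proof.
move=> LF; elim: s => [|i s IHs].
  by under eq_fun do rewrite big_nil; exact: sqintegrable_cst.
by under eq_fun do rewrite big_cons; exact: sqintegrableD.
Qed.

Lemma ExpectD h k : rintegrable h -> rintegrable k ->
  Expect P (fun x => h x + k x) = Expect P h + Expect P k.
Proof. exact: RintegralD. Qed.

Lemma ExpectZ c h : rintegrable h -> Expect P (fun x => c * h x) = c * Expect P h.
Proof. exact: RintegralZl. Qed.

Lemma Expect_sum (I : Type) (s : seq I) (F : I -> T -> R) :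
  (forall i, rintegrable (F i)) ->
  Expect P (fun x => \sum_(i <- s) F i x) = \sum_(i <- s) Expect P (F i).
Proof.
move=> iF; elim: s => [|i s IHs].
  by under eq_fun do rewrite big_nil; rewrite big_nil /Expect Rintegral_cst // mul0r.
under eq_fun do rewrite big_cons.
by rewrite ExpectD ?IHs ?big_cons //; exact: rintegrable_sum.
Qed.

Lemma le_Expect h k : rintegrable h -> rintegrable k -> (forall x, h x <= k x) ->
  Expect P h <= Expect P k.
Proof. by move=> ih ik hk; apply: le_Rintegral. Qed.

Lemma Expect_ge0 h : (forall x, 0 <= h x) -> 0 <= Expect P h.
Proof. by move=> h0; apply: Rintegral_ge0. Qed.

Lemma L2vec_mulmx p n (W : 'M[R]_(p, n)) (f : T -> 'cV[R]_n) :
  L2vec P f -> L2vec P (fun x => W *m f x).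
Proof.
move=> Lf k; apply: eq_sqintegrable (sqintegrable_sum (index_enum 'I_n)
  (fun j => sqintegrableZ (W k j) (Lf j))) => x.
by rewrite mxE.
Qed.

Lemma L2vecB n (f g : T -> 'cV[R]_n) :
  L2vec P f -> L2vec P g -> L2vec P (fun x => f x - g x).
Proof.
by move=> Lf Lg k; apply: eq_sqintegrable (sqintegrableB (Lf k) (Lg k)) => x; rewrite !mxE.
Qed.

Lemma rintegrable_sqnorm n (f : T -> 'cV[R]_n) :
  L2vec P f -> rintegrable (fun x => sqnorm (f x)).
Proof. by move=> Lf; apply: rintegrable_sum => i; exact: (Lf i).2. Qed.

Lemma Expect_sqnorm n (f : T -> 'cV[R]_n) : L2vec P f ->
  Expect P (fun x => sqnorm (f x)) = \sum_i Expect P (fun x => f x i ord0 ^+ 2).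
Proof. by move=> Lf; apply: Expect_sum => i; exact: (Lf i).2. Qed.

Lemma Expect_entry_le_sqnorm n (f : T -> 'cV[R]_n) i : L2vec P f ->
  Expect P (fun x => f x i ord0 ^+ 2) <= Expect P (fun x => sqnorm (f x)).
Proof.
move=> Lf; apply: le_Expect (Lf i).2 (rintegrable_sqnorm Lf) _ => x.
exact: sqnorm_ge_entry.
Qed.

Lemma Expect_sqr_dotmx n (f : T -> 'cV[R]_n) (v : 'cV[R]_n) : L2vec P f ->
  Expect P (fun x => ((v^T *m f x) ord0 ord0) ^+ 2) = (v^T *m covmx P f *m v) ord0 ord0.
Proof.
move=> Lf.
have -> : (fun x => ((v^T *m f x) ord0 ord0) ^+ 2) =
    (fun x => \sum_i \sum_j v i ord0 * v j ord0 * (f x i ord0 * f x j ord0)).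
  apply/funext => x; rewrite mxE expr2 big_distrlr /=.
  by apply: eq_bigr => i _; apply: eq_bigr => j _; rewrite !mxE; ring.
have Lff i j : rintegrable (fun x => f x i ord0 * f x j ord0) by exact: sqintegrableM.
rewrite Expect_sum => [|i]; last by apply: rintegrable_sum => j; exact: rintegrableZ.
rewrite mxE; under [RHS]eq_bigr do rewrite mxE mulr_suml.
rewrite [RHS]exchange_big; apply: eq_bigr => i _.
rewrite Expect_sum => [|j]; last exact: rintegrableZ.
by apply: eq_bigr => j _; rewrite ExpectZ // !mxE; ring.
Qed.

Lemma Expect_sqr_dotmx_ge n (f : T -> 'cV[R]_n) (v : 'cV[R]_n) : L2vec P f ->
  frob2 (covmx P f - 1%:M) <= 1/16 ->
  3/4 * sqnorm v <= Expect P (fun x => ((v^T *m f x) ord0 ord0) ^+ 2).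
Proof.
move=> Lf cov_near; have V_ge0 := sqnorm_ge0 v.
rewrite Expect_sqr_dotmx // -[covmx _ _](subrK 1%:M) mulmxDr mulmxDl mulmx1.
rewrite [in X in _ <= X]mxE -sqnormE.
have := sqr_quad_form_le (covmx P f - 1%:M) v.
set t := (_ *m _ *m _) ord0 ord0; set D := frob2 _ => t_sqr.
have : sqnorm v ^+ 2 * D <= sqnorm v ^+ 2 * (1/16) by apply: ler_wpM2l; rewrite ?sqr_ge0.
nra.
Qed.

End expectation.

Lemma sqintegrable_comp d1 d2 (T : measurableType d1) (U : measurableType d2)
    (R : realType) (P : probability T R) (Q : probability U R) (p : T -> U) (h : U -> R) :
  measurable_fun setT p -> (forall A, measurable A -> P (p @^-1` A) = Q A) ->
  sqintegrable Q h -> sqintegrable P (h \o p).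
Proof.
move=> mp pPQ [mh /integrableP[_ ih]]; have mhp := measurableT_comp mh mp.
split => //; apply/integrableP; split.
  by apply/measurable_EFinP; exact: measurable_funX.
rewrite (_ : (\int[P]_(x in setT) _)%E =
    (\int[P]_(x in p @^-1` setT) ((fun y => `|((h y) ^+ 2)%:E|%E) \o p) x)%E);
  last by rewrite preimage_setT.
rewrite -(ge0_integral_pushforward mp) //; last first.
  by apply: measurableT_comp => //; apply/measurable_EFinP; exact: measurable_funX.
by rewrite (eq_measure_integral Q) // => A mA _; exact: pPQ.
Qed.

Section two_views.
Context d (X : measurableType d) (R : realType)
  (ppos : probability (X * X)%type R) (pdata : probability X R) (n : nat).
Implicit Types f : X -> 'cV[R]_n.

Lemma Lloss_isotropic lam f : covmx pdata f = 1%:M ->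
  Lloss ppos pdata lam f = Expect ppos (fun z => sqnorm (f z.1 - f z.2)).
Proof. by rewrite /Lloss => ->; rewrite subrr frob20 mulr0 addr0. Qed.

Lemma Lloss_le_bounds lam f c : 0 < lam -> Lloss ppos pdata lam f <= c ->
  Expect ppos (fun z => sqnorm (f z.1 - f z.2)) <= c /\
  frob2 (covmx pdata f - 1%:M) <= c / lam.
Proof.
rewrite /Lloss => lam_gt0 Lf_le.
have := Expect_ge0 ppos (fun z => sqnorm_ge0 (f z.1 - f z.2)).
have := frob2_ge0 (covmx pdata f - 1%:M).
by split; [nra | rewrite ler_pdivlMr //; nra].
Qed.

Hypothesis marginals : forall A : set X, measurable A ->
  ppos (fst @^-1` A) = pdata A /\ ppos (snd @^-1` A) = pdata A.

Lemma L2vec_views f : L2vec pdata f -> L2vec ppos (fun z => f z.1 - f z.2).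
Proof.
move=> Lf; apply: L2vecB => i.
- exact: sqintegrable_comp measurable_fst (fun A mA => (marginals mA).1) (Lf i).
- exact: sqintegrable_comp measurable_snd (fun A mA => (marginals mA).2) (Lf i).
Qed.

Lemma view_variance_entry_le f i (phi phit dl : R) :
  L2vec pdata f -> 0 <= phit ->
  Expect ppos (fun z => sqnorm (f z.1 - f z.2)) <= phi ->
  phi <= phit * (1 - Num.sqrt dl) ->
  frob2 (covmx pdata f - 1%:M) <= dl ->
  Expect ppos (fun z => (f z.1 i ord0 - f z.2 i ord0) ^+ 2)
    <= phit * Expect pdata (fun x => f x i ord0 ^+ 2).
Proof.
move=> Lf phit_ge0 var_le phi_le cov_le.
have -> : (fun z => (f z.1 i ord0 - f z.2 i ord0) ^+ 2) =
    (fun z => (f z.1 - f z.2) i ord0 ^+ 2) by apply/funext => z; rewrite !mxE.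
apply: le_trans (Expect_entry_le_sqnorm i (L2vec_views Lf)) _.
apply: le_trans (le_trans var_le phi_le) _.
apply: (ler_wpM2l phit_ge0).
have -> : Expect pdata (fun x => f x i ord0 ^+ 2) = covmx pdata f i i.
  by rewrite mxE; under eq_fun do rewrite expr2.
apply: le_trans (diag_ge_sub_sqrt_frob2 _ i).
by rewrite lerD2l lerN2 ler_wsqrtr.
Qed.

End two_views.

Section downstream.
Context d (X : measurableType d) (R : realType) (pdata : probability X R) (m r : nat).
Variables (feig fhat : X -> 'cV[R]_m) (y : X -> 'cV[R]_r).
Hypotheses (feig_L2 : L2vec pdata feig) (fhat_L2 : L2vec pdata fhat)
  (y_L2 : L2vec pdata y).
Hypothesis feig_iso : covmx pdata feig = 1%:M.

Lemma L2vec_residual (W : 'M[R]_(r, m)) f : L2vec pdata f ->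
  L2vec pdata (fun x => W *m f x - y x).
Proof. by move=> Lf; apply: L2vecB => //; exact: L2vec_mulmx. Qed.

Lemma L2vec_approx_error (G : 'M[R]_m) : L2vec pdata (fun x => fhat x - G *m feig x).
Proof. by apply: L2vecB => //; exact: L2vec_mulmx. Qed.

Lemma Expect_sqr_dotmx_isotropic v :
  Expect pdata (fun x => ((v^T *m feig x) ord0 ord0) ^+ 2) = sqnorm v.
Proof. by rewrite Expect_sqr_dotmx // feig_iso mulmx1 sqnormE. Qed.

Lemma Expect_sqnorm_mulmx_isotropic p (W : 'M[R]_(p, m)) :
  Expect pdata (fun x => sqnorm (W *m feig x)) = frob2 W.
Proof.
rewrite Expect_sqnorm; last exact: L2vec_mulmx.
rewrite frob2_rows; apply: eq_bigr => k _.
rewrite -Expect_sqr_dotmx_isotropic trmxK.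
by congr Expect; apply/funext => x; rewrite -row_mul [in RHS]mxE.
Qed.

Lemma approx_matrix_exists (eps : R) :
  (forall i, exists w : 'cV[R]_m,
     Expect pdata (fun x => ((w^T *m feig x) ord0 ord0 - fhat x i ord0) ^+ 2) <= eps) ->
  exists G : 'M[R]_m, Expect pdata (fun x => sqnorm (fhat x - G *m feig x)) <= m%:R * eps.
Proof.
move=> /choice[w w_approx]; exists (\matrix_(i, j) w i j ord0).
rewrite Expect_sqnorm; last exact: L2vec_approx_error.
have -> : m%:R * eps = \sum_(i < m) eps by rewrite sumr_const card_ord mulr_natl.
apply: ler_sum => i _; apply: le_trans (w_approx i); rewrite le_eqVlt; apply/orP; left.
apply/eqP; congr Expect; apply/funext => x; rewrite -sqrrN !mxE opprB.
by congr ((_ - _) ^+ 2); apply: eq_bigr => j _; rewrite !mxE.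
Qed.

Lemma coercive_of_approximation (G : 'M[R]_m) :
  frob2 (covmx pdata fhat - 1%:M) <= 1/16 ->
  Expect pdata (fun x => sqnorm (fhat x - G *m feig x)) <= 1/64 ->
  forall v, sqnorm v <= 3 * sqnorm (G^T *m v).
Proof.
move=> cov_near approx v; have V_ge0 := sqnorm_ge0 v.
have dot_int n (f : X -> 'cV[R]_n) (w : 'cV[R]_n) : L2vec pdata f ->
    rintegrable pdata (fun x => ((w^T *m f x) ord0 ord0) ^+ 2).
  by move=> Lf; exact: (L2vec_mulmx w^T Lf ord0).2.
have pointwise x : ((v^T *m fhat x) ord0 ord0) ^+ 2 <=
    2 * ((G^T *m v)^T *m feig x) ord0 ord0 ^+ 2
    + 2 * (sqnorm v * sqnorm (fhat x - G *m feig x)).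
  rewrite -[fhat x](subrK (G *m feig x)) addrK mulmxDr mxE trmx_mul trmxK mulmxA.
  have := cauchy_schwarz v (fhat x - G *m feig x).
  set p := (_ *m _) ord0 ord0; set q := (_ *m _) ord0 ord0.
  by have := sqr_ge0 (p - q); nra.
have e_int := rintegrable_sqnorm (L2vec_approx_error G).
have p_int := dot_int _ _ (G^T *m v) feig_L2.
have := le_Expect (dot_int _ _ v fhat_L2)
  (rintegrableD (rintegrableZ 2 p_int) (rintegrableZ 2 (rintegrableZ _ e_int))) pointwise.
rewrite ExpectD ?ExpectZ //; try by do ?apply: rintegrableZ.
rewrite Expect_sqr_dotmx_isotropic.
have := Expect_sqr_dotmx_ge v fhat_L2 cov_near.
have : sqnorm v * Expect pdata (fun x => sqnorm (fhat x - G *m feig x)) <= sqnorm v * (1/64).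
  exact: ler_wpM2l.
lra.
Qed.

Lemma risk_mulmx_invmx_le (G : 'M[R]_m) (Ws : 'M[R]_(r, m)) (c : R) :
  (forall v, sqnorm v <= c * sqnorm (G^T *m v)) ->
  Expect pdata (fun x => sqnorm (Ws *m invmx G *m fhat x - y x)) <=
    2 * (c * frob2 Ws) * Expect pdata (fun x => sqnorm (fhat x - G *m feig x))
    + 2 * Expect pdata (fun x => sqnorm (Ws *m feig x - y x)).
Proof.
move=> coercive; set W := Ws *m invmx G.
have WG : W *m G = Ws.
  by rewrite /W -mulmxA mulVmx ?mulmx1 //; exact: coercive_unitmx coercive.
have pointwise x : sqnorm (W *m fhat x - y x) <=
    2 * (c * frob2 Ws) * sqnorm (fhat x - G *m feig x)
    + 2 * sqnorm (Ws *m feig x - y x).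
  have -> : W *m fhat x - y x = W *m (fhat x - G *m feig x) + (Ws *m feig x - y x).
    by rewrite mulmxBr mulmxA WG addrA subrK.
  apply: le_trans (sqnormD_le _ _) _; rewrite lerD2r -mulrA ler_wpM2l //.
  apply: le_trans (sqnorm_mulmx_le _ _) _; rewrite ler_wpM2r ?sqnorm_ge0 //.
  exact: frob2_mulmx_invmx_le.
have e_int := rintegrable_sqnorm (L2vec_approx_error G).
have Ws_int := rintegrable_sqnorm (L2vec_residual Ws feig_L2).
apply: le_trans (le_Expect _ _ pointwise) _.
- exact: rintegrable_sqnorm (L2vec_residual W fhat_L2).
- by apply: rintegrableD; exact: rintegrableZ.
by rewrite ExpectD ?ExpectZ //; exact: rintegrableZ.
Qed.

Lemma risk_zero_le (Ws : 'M[R]_(r, m)) :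
  Expect pdata (fun x => sqnorm (0 *m fhat x - y x)) <=
    2 * Expect pdata (fun x => sqnorm (Ws *m feig x - y x)) + 2 * frob2 Ws.
Proof.
have pointwise x : sqnorm (0 *m fhat x - y x) <=
    2 * sqnorm (Ws *m feig x - y x) + 2 * sqnorm (Ws *m feig x).
  have -> : 0 *m fhat x - y x = (Ws *m feig x - y x) + - (Ws *m feig x).
    by rewrite mul0mx sub0r addrC addKr.
  by apply: le_trans (sqnormD_le _ _) _; rewrite sqnormN.
have Ws_int := rintegrable_sqnorm (L2vec_residual Ws feig_L2).
have Wsf_int := rintegrable_sqnorm (L2vec_mulmx Ws feig_L2).
apply: le_trans (le_Expect _ _ pointwise) _.
- exact: rintegrable_sqnorm (L2vec_residual 0 fhat_L2).
- by apply: rintegrableD; exact: rintegrableZ.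
by rewrite ExpectD ?ExpectZ ?Expect_sqnorm_mulmx_isotropic //; exact: rintegrableZ.
Qed.

Section risk_bounds.
Variables (Ws : 'M[R]_(r, m)) (B zeta eps dl : R).
Hypotheses (Ws_le : frob2 Ws <= B ^+ 2)
  (Ws_risk : Expect pdata (fun x => sqnorm (Ws *m feig x - y x)) <= zeta).

Let zeta_ge0 : 0 <= zeta.
Proof. exact: le_trans (Expect_ge0 _ (fun x => sqnorm_ge0 _)) Ws_risk. Qed.

Lemma zero_predictor_risk_bound : 1/64 <= m%:R * (eps + dl) ->
  Expect pdata (fun x => sqnorm (0 *m fhat x - y x))
    <= 128 * (zeta + B ^+ 2 * m%:R * (eps + dl)).
Proof.
move=> far; apply: le_trans (risk_zero_le Ws) _.
have : B ^+ 2 * (1/64) <= B ^+ 2 * m%:R * (eps + dl).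
  by rewrite -mulrA; apply: ler_wpM2l; rewrite ?sqr_ge0.
have := Ws_le; have := Ws_risk; have := zeta_ge0; lra.
Qed.

Lemma transferred_predictor_risk_bound (G : 'M[R]_m) :
  Expect pdata (fun x => sqnorm (fhat x - G *m feig x)) <= m%:R * eps ->
  frob2 (covmx pdata fhat - 1%:M) <= dl ->
  m%:R * (eps + dl) < 1/64 ->
  Expect pdata (fun x => sqnorm (Ws *m invmx G *m fhat x - y x))
    <= 128 * (zeta + B ^+ 2 * m%:R * (eps + dl)).
Proof.
set Se := Expect _ _ => approx cov_le near.
have Se_ge0 : 0 <= Se by apply: Expect_ge0 => x; exact: sqnorm_ge0.
have dl_ge0 := le_trans (frob2_ge0 _) cov_le.
have mdl_ge0 : 0 <= m%:R * dl by rewrite mulr_ge0.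
have Se_small : Se <= 1/64 by lra.
have cov_near : frob2 (covmx pdata fhat - 1%:M) <= 1/16.
  (* [dl <= m * dl] needs [m > 0]; for [m = 0] the matrix is empty. *)
  have [m0|m_gt0] := posnP m.
    by rewrite /frob2 big1 // => i; move: (ltn_ord i); rewrite {2}m0.
  have : dl <= m%:R * dl by rewrite ler_peMl // ler1n.
  lra.
apply: le_trans (risk_mulmx_invmx_le Ws (coercive_of_approximation cov_near Se_small)) _.
rewrite -/Se; have := ler_pM (frob2_ge0 Ws) Se_ge0 Ws_le approx.
have : 0 <= B ^+ 2 * m%:R * dl by rewrite -mulrA mulr_ge0 ?sqr_ge0.
have := Ws_risk; have := zeta_ge0; nra.
Qed.

End risk_bounds.

End downstream.

Unset Implicit Arguments. Set Strict Implicit.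

Theorem theorem2 (R : realType) :
  exists C : R, 0 < C /\
  forall (d : measure_display) (X : measurableType d)
    (ppos : probability (X * X)%type R) (pdata : probability X R)
    (m r : nat) (F : set (X -> 'cV[R]_m))
    (feig : X -> 'cV[R]_m) (y : X -> 'cV[R]_r)
    (phi phit eps B zeta lam : R) (fhat : X -> 'cV[R]_m),
    (* p_data is the marginal of p_pos (law of either view) *)
    (forall A : set X, measurable A ->
       ppos (fst @^-1` A) = pdata A /\ ppos (snd @^-1` A) = pdata A) ->
    (* the expectations involved are well defined *)
    (forall f, F f -> L2vec pdata f) ->
    L2vec pdata y ->
    (* f_eig *)
    0 <= phi ->
    F feig ->
    Expect ppos (fun z => sqnorm (feig z.1 - feig z.2)) <= phi ->
    covmx pdata feig = 1%:M ->
    (* assumption (A) *)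
    (forall f, F f -> forall i : 'I_m,
       let g := fun x => f x i ord0 in
       Expect ppos (fun z => (g z.1 - g z.2) ^+ 2)
         <= phit * Expect pdata (fun x => g x ^+ 2) ->
       exists w : 'cV[R]_m,
         Expect pdata (fun x => ((w^T *m feig x) ord0 ord0 - g x) ^+ 2) <= eps) ->
    (* assumption (B) *)
    (exists Ws : 'M[R]_(r, m),
       Num.sqrt (frob2 Ws) <= B /\
       Expect pdata (fun x => sqnorm (Ws *m feig x - y x)) <= zeta) ->
    (phi < phit \/ (phit = 0 /\ phi = 0)) ->
    0 < lam ->
    phi <= phit * (1 - Num.sqrt (phi / lam)) ->
    (* fhat is a minimizer of L_lam over F *)
    F fhat ->
    (forall f, F f -> Lloss ppos pdata lam fhat <= Lloss ppos pdata lam f) ->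
    exists W : 'M[R]_(r, m),
      Expect pdata (fun x => sqnorm (W *m fhat x - y x))
        <= C * (zeta + B ^+ 2 * m%:R * (eps + phi / lam)).
Proof.
exists 128; split => // d X ppos pdata m r F feig y phi phit eps B zeta lam fhat
  marginals F_L2 y_L2 phi_ge0 F_feig feig_var feig_iso approxA [Ws [Ws_le Ws_risk]]
  phit_cases lam_gt0 phi_le F_fhat fhat_min.
have feig_loss : Lloss ppos pdata lam feig <= phi by rewrite Lloss_isotropic.
have [fhat_var fhat_cov] := Lloss_le_bounds lam_gt0 (le_trans (fhat_min _ F_feig) feig_loss).
have phit_ge0 : 0 <= phit by case: phit_cases => [|[]]; lra.
have feig_L2 := F_L2 _ F_feig; have fhat_L2 := F_L2 _ F_fhat.
have [G G_approx] := approx_matrix_exists feig_L2 fhat_L2 (fun i => approxA _ F_fhat i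
  (view_variance_entry_le marginals i fhat_L2 phit_ge0 fhat_var phi_le fhat_cov)).
have Ws_frob : frob2 Ws <= B ^+ 2.
  by rewrite -(sqr_sqrtr (frob2_ge0 Ws)); have := sqrtr_ge0 (frob2 Ws); nra.
have [near | far] := ltrP (m%:R * (eps + phi / lam)) (1/64).
- exists (Ws *m invmx G); exact: (transferred_predictor_risk_bound feig_L2 fhat_L2
    y_L2 feig_iso Ws_frob Ws_risk G_approx fhat_cov near).
- exists 0; exact: (zero_predictor_risk_bound feig_L2 fhat_L2 y_L2 feig_iso
    Ws_frob Ws_risk far).
Qed.
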